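(* There exist an absolute constant $\varepsilon_0\in(0,\frac12)$ and an absolute constant $C>0$ such that the following holds. Let $0<\varepsilon<\varepsilon_0$, let $n\in\mathbb{N}$ with $n>10^5\varepsilon^{-9/2}$, and let $A\subset\mathbb{N}$ satisfy $$\forall x\in\llbracket n^{1/3},\varepsilon n\rrbracket,\ \forall m\in\llbracket 2x,2\varepsilon^{-1}x\rrbracket:\quad \big|A\cap\llbracket m-2x,m-x\rrbracket\big|>\varepsilon x^{2/3}\log\Big(\frac nx\Big).$$ Then there exists $B\subset\llbracket n^{1/3},2\varepsilon n\rrbracket$ with $|B|\le C\varepsilon^{-2/3}n^{1/3}$ and $$\forall t\in\llbracket 2n^{1/3},2n\rrbracket:\quad \big|\llbracket 2n^{1/3},t\rrbracket\setminus(A+B)\big|\le\varepsilon t.$$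
   Context: For real $u\le v$, $\llbracket u,v\rrbracket$ denotes the set of integers in $[u,v]$. $A+B=\{a+b:a\in A,b\in B\}$. *)

From mathcomp Require Export all_boot.
From Stdlib Require Export Reals.

Definition Rleb (x y : R) : bool := if Rle_dec x y then true else false.

(* k \in A + B  (A a subset of N given by its characteristic function,
   B a finite set of naturals given as a duplicate-free list):
   exists b in B, a in A with a + b = k. *)
Definition sumset_mem (A : pred nat) (B : seq nat) (k : nat) : bool :=
  has (fun b => (b <= k) && A (k - b)) B.

(* Fix a scale x in [n^(1/3), eps n].  By the density hypothesis every m in
   [2x, 2x/eps] is of the form a + b with a in A and b in [x, 2x] in more than
   d ~ eps x^(2/3) log(1/eps) ways.  Choosing translates b greedily, each time the one hitting
   the most still uncovered targets, removes at least a fraction d/(x+1) of them, so after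
   s ~ 6 x^(1/3)/eps choices only a fraction (1 - d/(x+1))^s <= eps^3 of [2x, 2x/eps] is
   missed.  Doing this at the scales eps n, eps n/8, eps n/64, ... down to n^(1/3) gives a set B
   of size O(eps^(-1) (eps n)^(1/3)) = O(eps^(-2/3) n^(1/3)) (a geometric sum), and by induction
   on the scale fewer than eps t/2 elements of [2n^(1/3), t] are missed: the new scale x only
   deals with t in (2x, 2x/eps], while [0, 2x] lies in the range of the previous scale. *)

From mathcomp Require Import zify.
From Stdlib Require Import Lra Lia.

Lemma count_iota_reflect (P : pred nat) (k a len : nat) : (a + len <= k + 1)%nat ->
  count (fun b => P (k - b)) (iota a len) = count P (iota (k + 1 - a - len) len).
Proof.
elim: len a => [//|len IH] a bound.
have snoc c : count P (iota c len.+1) = (count P (iota c len) + P (c + len))%nat.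
  by rewrite -addn1 iotaD count_cat /= addn0.
rewrite snoc [in LHS]/= IH; last by lia.
have -> : (k + 1 - a.+1 - len = k + 1 - a - len.+1)%nat by lia.
have -> : (k + 1 - a - len.+1 + len = k - a)%nat by lia.
by rewrite addnC.
Qed.

Lemma count_iota_mono (P : pred nat) (a l a' l' : nat) :
  (a' <= a)%nat -> (a + l <= a' + l')%nat ->
  (count P (iota a l) <= count P (iota a' l'))%nat.
Proof.
move=> le_a' le_end.
have -> : l' = ((a - a') + (l + (a' + l' - (a + l))))%nat by lia.
rewrite iotaD iotaD !count_cat.
have -> : (a' + (a - a') = a)%nat by lia.
lia.
Qed.

Lemma count_iota_ge (c N : nat) : count (fun k => c <= k)%nat (iota 0 N) = (N - c)%nat.
Proof.
elim: N => [//|N IH].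
rewrite -addn1 iotaD count_cat IH /= add0n addn0.
by case: (leqP c N) => le_cN /=; lia.
Qed.

Lemma count_sumset_window (P : pred nat) (x k : nat) : (2 * x <= k)%nat ->
  count (fun b => (b <= k)%nat && P (k - b)) (iota x (x + 1))
  = count P (iota (k - 2 * x) (x + 1)).
Proof.
move=> le_2x_k.
rewrite (@eq_in_count _ _ (fun b => P (k - b))); last first.
  by move=> b; rewrite mem_iota => /andP [_ lt_b]; have -> : (b <= k)%nat by lia.
rewrite count_iota_reflect; last by lia.
by have -> : (k + 1 - x - (x + 1) = k - 2 * x)%nat by lia.
Qed.

(** * Greedy covering *)

Section GreedyCover.

Context {I J : eqType} (cov : I -> J -> bool).

Lemma exists_ge_average (f : I -> nat) {s : seq I} : s != [::] ->
  exists2 i, i \in s & (\sum_(j <- s) f j <= size s * f i)%nat.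
Proof.
elim: s => [//|a s IH] _.
case: (altP (s =P [::])) => [-> | /IH [i i_s le_i]].
  by exists a; rewrite ?mem_head // big_seq1 mul1n.
rewrite big_cons /=.
case: (leqP (f i) (f a)) => [le_ia | lt_ai].
  by exists a; rewrite ?mem_head //; nia.
by exists i; rewrite ?in_cons ?i_s ?orbT //; nia.
Qed.

Lemma sum_count_exchange (Bc : seq I) (U : seq J) :
  (\sum_(b <- Bc) count (cov b) U = \sum_(k <- U) count (cov^~ k) Bc)%nat.
Proof.
have count_as_sum (T : Type) (P : pred T) s : count P s = (\sum_(t <- s) P t)%nat.
  by rewrite -sum1_count big_mkcond.
under eq_bigr do rewrite count_as_sum.
rewrite exchange_big; apply: eq_bigr => k _.
by rewrite count_as_sum.
Qed.

Lemma greedy_step {Bc : seq I} {U : seq J} {d : nat} : Bc != [::] ->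
  (forall k, k \in U -> d <= count (cov^~ k) Bc)%nat ->
  exists2 b, b \in Bc & (count (predC (cov b)) U * size Bc <= size U * (size Bc - d))%nat.
Proof.
move=> Bc_nonnil hit.
have [b b_Bc avg] := exists_ge_average (fun b => count (cov b) U) Bc_nonnil.
exists b => //.
have hits_total : (d * size U <= \sum_(k <- U) count (cov^~ k) Bc)%nat.
  rewrite -sum1_size big_distrr big_seq [X in (_ <= X)%nat]big_seq /=.
  by apply: leq_sum => k /hit; rewrite muln1.
rewrite -sum_count_exchange in hits_total.
have := count_predC (cov b) U; have := count_size (cov b) U; nia.
Qed.

Lemma greedy_cover (Bc : seq I) (T : seq J) (d s : nat) :
  (forall k, k \in T -> d <= count (cov^~ k) Bc)%nat ->
  exists S : seq I, [/\ (size S <= s)%nat, {subset S <= Bc} &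
    (count (fun k => ~~ has (cov^~ k) S) T * expn (size Bc) s
       <= size T * expn (size Bc - d) s)%nat].
Proof.
move=> hit; elim: s => [|s [S [size_S sub_S uncovered]]]; first by exists [::].
case: (altP (Bc =P [::])) => [-> | Bc_nonnil].
  by exists [::]; split; rewrite // expnS mul0n muln0.
set U := filter (fun k => ~~ has (cov^~ k) S) T.
have hitU : forall k, k \in U -> (d <= count (cov^~ k) Bc)%nat.
  by move=> k; rewrite mem_filter => /andP [_ /hit].
have [b b_Bc step] := greedy_step Bc_nonnil hitU.
exists (b :: S); split; first by rewrite /=; lia.
  by move=> c; rewrite in_cons => /predU1P [-> | /sub_S].
have -> : count (fun k => ~~ has (cov^~ k) (b :: S)) T = count (predC (cov b)) U.
  by rewrite count_filter; apply: eq_count => k /=; rewrite negb_or andbC.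
rewrite -size_filter -/U in uncovered.
rewrite !expnS mulnA (mulnC (size Bc - d)) mulnA.
apply: (leq_trans (n := size U * (size Bc - d) * expn (size Bc) s)).
  by rewrite leq_mul2r step orbT.
by rewrite mulnAC leq_mul2r uncovered orbT.
Qed.

End GreedyCover.

Open Scope R_scope.

Lemma leq_INR {m k : nat} : (m <= k)%nat -> INR m <= INR k.
Proof. by move/leP; apply: le_INR. Qed.

Lemma INR_leq {m k : nat} : INR m <= INR k -> (m <= k)%nat.
Proof. by move=> le_mk; apply/leP; apply: INR_le. Qed.

Lemma INR_subn (m k : nat) : (k <= m)%nat -> INR (m - k) = INR m - INR k.
Proof. by move=> le_km; rewrite minus_INR //; apply/leP. Qed.

Lemma INR_expn (m k : nat) : INR (expn m k) = INR m ^ k.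
Proof. by elim: k => [|k IH]; rewrite ?expn0 // expnS mult_INR IH. Qed.

Lemma RlebP (a b : R) : Rleb a b -> a <= b.
Proof. by rewrite /Rleb; case: Rle_dec. Qed.

Definition nfloor (r : R) : nat := Z.to_nat (Zfloor r).
Definition nceil (r : R) : nat := Z.to_nat (Zceil r).

Lemma nfloor_spec {r : R} : 0 <= r -> INR (nfloor r) <= r < INR (nfloor r) + 1.
Proof.
move=> r_ge0; have z_ge0 : (0 <= Zfloor r)%Z by apply: Zfloor_lub.
by rewrite /nfloor INR_IZR_INZ Znat.Z2Nat.id //; apply: Zfloor_bound.
Qed.

Lemma nceil_spec {r : R} : 0 <= r -> r <= INR (nceil r) < r + 1.
Proof.
move=> r_ge0; have [lb ub] := Zceil_bound r.
have z_ge0 : (0 <= Zceil r)%Z by apply: le_IZR; lra.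
rewrite /nceil INR_IZR_INZ Znat.Z2Nat.id //; lra.
Qed.

Lemma nfloor_lt (r : R) (m : nat) : 0 <= r -> r < INR m -> (nfloor r < m)%nat.
Proof.
move=> r_ge0 lt_rm; have [le_fl _] := nfloor_spec r_ge0.
by apply/ltP; apply: INR_lt; lra.
Qed.

Lemma exp_le_compat (a b : R) : a <= b -> exp a <= exp b.
Proof.
by case/Rle_lt_or_eq_dec => [/exp_increasing/Rlt_le | ->] //; apply: Rle_refl.
Qed.

Lemma ln_le_compat (a b : R) : 0 < a -> a <= b -> ln a <= ln b.
Proof.
move=> a_gt0; case/Rle_lt_or_eq_dec => [/(ln_increasing _ _ a_gt0)/Rlt_le | ->] //.
exact: Rle_refl.
Qed.

Lemma exp_pow_nat (a : R) (s : nat) : exp a ^ s = exp (INR s * a).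
Proof. by rewrite -Rpower_pow; [rewrite /Rpower ln_exp | apply: exp_pos]. Qed.

Lemma INR_subn_le_exp (L d : nat) : (0 < L)%nat ->
  INR (L - d) <= INR L * exp (- (INR d / INR L)).
Proof.
move=> L_pos; have L_gt0 : 0 < INR L by apply: lt_0_INR; apply/ltP.
have exp_gt0 := exp_pos (- (INR d / INR L)).
case: (leqP d L) => [le_dL | lt_Ld]; last first.
  have -> : (L - d = 0)%nat by lia.
  by rewrite /=; nra.
have one_sub := exp_ineq1_le (- (INR d / INR L)).
rewrite INR_subn //.
have -> : INR L - INR d = INR L * (1 + - (INR d / INR L)) by field; lra.
by apply: Rmult_le_compat_l; lra.
Qed.

Lemma greedy_cover_exp {I J : eqType} {cov : I -> J -> bool} {Bc : seq I} {T : seq J}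
    {d : nat} (s : nat) :
  Bc != [::] -> (forall k, k \in T -> (d <= count (cov^~ k) Bc)%nat) ->
  exists S : seq I, [/\ (size S <= s)%nat, {subset S <= Bc} &
    INR (count (fun k => ~~ has (cov^~ k) S) T)
      <= INR (size T) * exp (- (INR s * INR d / INR (size Bc)))].
Proof.
move=> Bc_nonnil hit.
have [S [size_S sub_S uncovered]] := greedy_cover cov Bc T d s hit.
exists S; split => //.
have L_pos : (0 < size Bc)%nat by rewrite lt0n size_eq0.
have L_gt0 : 0 < INR (size Bc) by apply: lt_0_INR; apply/ltP.
move/leq_INR: uncovered; rewrite !mult_INR !INR_expn => uncovered.
have := pow_incr _ _ s (conj (pos_INR _) (INR_subn_le_exp _ d L_pos)).
rewrite Rpow_mult_distr exp_pow_nat => shrink.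
have Ls_gt0 : 0 < INR (size Bc) ^ s by apply: pow_lt.
have -> : - (INR s * INR d / INR (size Bc)) = INR s * - (INR d / INR (size Bc)) by field; lra.
apply: (Rmult_le_reg_r _ _ _ Ls_gt0).
have := pos_INR (size T); nra.
Qed.

Definition cbrt (x : R) : R := Rpower x (1/3).

Lemma cbrt_pos (x : R) : 0 < cbrt x.
Proof. exact: exp_pos. Qed.

Lemma cbrt_pow3 {x : R} : 0 < x -> cbrt x ^ 3 = x.
Proof.
move=> x_gt0; rewrite -Rpower_pow; last exact: cbrt_pos.
rewrite /cbrt Rpower_mult.
have -> : 1/3 * INR 3 = 1 by simpl; field.
exact: Rpower_1.
Qed.

Lemma cbrt_pow3K (a : R) : 0 < a -> cbrt (a ^ 3) = a.
Proof.
move=> a_gt0; rewrite /cbrt -Rpower_pow // Rpower_mult.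
have -> : INR 3 * (1/3) = 1 by simpl; field.
exact: Rpower_1.
Qed.

Lemma Rpower_two_thirds (x : R) : 0 < x -> Rpower x (2/3) = cbrt x ^ 2.
Proof.
move=> x_gt0; rewrite -Rpower_pow; last exact: cbrt_pos.
by rewrite /cbrt Rpower_mult; congr Rpower; simpl; field.
Qed.

Lemma Rpower_neg_two_thirds (x : R) : 0 < x -> Rpower x (-2/3) = cbrt x / x.
Proof.
move=> x_gt0; have -> : -2/3 = 1/3 + - (1) by field.
by rewrite Rpower_plus Rpower_Ropp Rpower_1.
Qed.

Lemma cbrt_le {x y : R} : 0 < x -> x <= y -> cbrt x <= cbrt y.
Proof. by move=> x_gt0 le_xy; apply: Rle_Rpower_l; lra. Qed.

Lemma cbrt_ge1 {x : R} : 1 <= x -> 1 <= cbrt x.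
Proof.
move=> x_ge1; have -> : 1 = cbrt 1 by rewrite /cbrt /Rpower ln_1 Rmult_0_r exp_0.
by apply: cbrt_le; lra.
Qed.

Lemma cbrt_mul8_le {x y : R} : 0 < y -> 8 * y <= x -> 2 * cbrt y <= cbrt x.
Proof.
move=> y_gt0 le_8y_x.
have cbrt8 : cbrt 8 = 2.
  have -> : 8 = 2 ^ 3 by ring.
  by apply: cbrt_pow3K; lra.
have -> : 2 * cbrt y = cbrt (8 * y) by rewrite -cbrt8 /cbrt Rpower_mult_distr //; lra.
by apply: cbrt_le; lra.
Qed.

(** * Covering at all scales *)

Section MultiscaleCover.

Variables (eps : R) (n : nat) (A : pred nat).

Local Notation u := (cbrt (INR n)).

Hypothesis eps_gt0 : 0 < eps.
Hypothesis eps_lt : eps < 1/64.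
Hypothesis eps_u_ge3 : 3 <= eps * u.
Hypothesis u_le_eps_n : u + 2 <= eps * INR n.
Hypothesis inv_eps_le_eps_n : 4 / eps + 2 <= eps * INR n.
Hypothesis A_dense : forall x m : nat,
  u <= INR x -> INR x <= eps * INR n -> 2 * INR x <= INR m -> INR m <= 2 / eps * INR x ->
  INR (count A (iota (m - 2 * x)%nat (x + 1)%nat))
    > eps * Rpower (INR x) (2/3) * ln (INR n / INR x).

Definition reach (x : nat) : nat := nfloor (2 / eps * INR x).

Definition base_scale : nat := nceil u.

Definition missed (B : seq nat) (k : nat) : bool :=
  Rleb (2 * u) (INR k) && ~~ sumset_mem A B k.

Definition covers_upto (B : seq nat) (T : nat) : Prop :=
  forall t : nat, 2 * u <= INR t -> (t <= T)%nat ->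
    INR (count (missed B) (iota 0 (t + 1))) <= eps * INR t / 2.

Lemma inv_eps_gt64 : 64 < / eps.
Proof. by rewrite -[64]Rinv_inv; apply: Rinv_lt_contravar; lra. Qed.

Lemma ln_eps_lt0 : ln eps < 0.
Proof. by rewrite -ln_1; apply: ln_increasing; lra. Qed.

Lemma u_ge1 : 1 <= u.
Proof.
have u_gt0 := cbrt_pos (INR n).
have : eps * u <= 1/64 * u by apply: Rmult_le_compat_r; lra.
lra.
Qed.

Lemma n_gt0 : 0 < INR n.
Proof. by have := cbrt_pos (INR n); nra. Qed.

Lemma reach_spec (x : nat) : 2 / eps * INR x - 1 < INR (reach x) <= 2 / eps * INR x.
Proof.
have r_ge0 : 0 <= 2 / eps * INR x.
  by apply: Rmult_le_pos; [apply: Rlt_le; apply: Rdiv_lt_0_compat; lra | apply: pos_INR].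
have := nfloor_spec r_ge0; rewrite /reach; lra.
Qed.

Lemma three_mul_le_reach (x z : nat) : (1 <= z)%nat -> (x <= 8 * z + 7)%nat ->
  (3 * x <= reach z)%nat.
Proof.
move=> /leq_INR z_ge1 /leq_INR x_le; rewrite plus_INR !mult_INR /= in x_le z_ge1.
have [reach_gt _] := reach_spec z.
have : 128 * INR z <= 2 / eps * INR z.
  by apply: Rmult_le_compat_r; [apply: pos_INR | have := inv_eps_gt64; rewrite /Rdiv; lra].
by move=> ?; apply: INR_leq; rewrite mult_INR /=; lra.
Qed.

Lemma double_le_reach (x : nat) : (1 <= x)%nat -> (2 * x <= reach x)%nat.
Proof. by move=> x_ge1; have := three_mul_le_reach x x x_ge1 ltac:(lia); lia. Qed.

Lemma ln_ratio_ge (x : nat) : 0 < INR x -> INR x <= eps * INR n ->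
  - ln eps <= ln (INR n / INR x).
Proof.
move=> x_gt0 x_le; rewrite -ln_Rinv //; apply: ln_le_compat; first exact: Rinv_0_lt_compat.
have -> : INR n / INR x = / eps * (eps * INR n / INR x) by field; lra.
rewrite -{1}[/ eps]Rmult_1_r; apply: Rmult_le_compat_l.
  by apply: Rlt_le; apply: Rinv_0_lt_compat.
apply: (Rmult_le_reg_r (INR x)) => //.
have -> : eps * INR n / INR x * INR x = eps * INR n by field; lra.
lra.
Qed.

Lemma window_hits (x k : nat) : u <= INR x -> INR x <= eps * INR n ->
  (2 * x <= k)%nat -> (k <= reach x)%nat ->
  eps * cbrt (INR x) ^ 2 * - ln eps
    < INR (count (fun b => (b <= k)%nat && A (k - b)%nat) (iota x (x + 1))).
Proof.
move=> u_le_x x_le lo hi.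
have x_gt0 : 0 < INR x by have := u_ge1; lra.
rewrite count_sumset_window // -Rpower_two_thirds //.
apply: (Rle_lt_trans _ (eps * Rpower (INR x) (2/3) * ln (INR n / INR x))).
  apply: Rmult_le_compat_l; last exact: ln_ratio_ge.
  by apply: Rmult_le_pos; [lra | apply: Rlt_le; apply: exp_pos].
apply: A_dense => //.
  by have := leq_INR lo; rewrite mult_INR.
by have := leq_INR hi; have := reach_spec x; lra.
Qed.

Lemma greedy_rounds_enough (x s d : nat) : 1 <= INR x ->
  6 * cbrt (INR x) / eps <= INR s -> eps * cbrt (INR x) ^ 2 * - ln eps <= INR d ->
  exp (- (INR s * INR d / INR (x + 1))) <= eps ^ 3.
Proof.
move=> x_ge1 s_ge d_ge.
have ln_eps_neg := ln_eps_lt0.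
have c_gt0 := cbrt_pos (INR x).
have x3 : cbrt (INR x) ^ 3 = INR x by apply: cbrt_pow3; lra.
have prod_ge : 6 * INR x * - ln eps <= INR s * INR d.
  have -> : 6 * INR x * - ln eps
      = 6 * cbrt (INR x) / eps * (eps * cbrt (INR x) ^ 2 * - ln eps).
    by rewrite -{1}x3; field; lra.
  apply: Rmult_le_compat => //.
    by apply: Rlt_le; apply: Rdiv_lt_0_compat; lra.
  by apply: Rmult_le_pos; [apply: Rmult_le_pos; [lra | apply: pow_le; lra] | lra].
have ratio_ge : 3 * - ln eps <= INR s * INR d / INR (x + 1).
  rewrite plus_INR /=; apply: (Rmult_le_reg_r (INR x + 1)); first lra.
  have -> : INR s * INR d / (INR x + 1) * (INR x + 1) = INR s * INR d by field; lra.
  nra.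
rewrite -(exp_ln eps) // exp_pow_nat; apply: exp_le_compat; simpl INR; lra.
Qed.

Lemma scale_cover (x : nat) : u <= INR x -> INR x <= eps * INR n ->
  exists G : seq nat, [/\ forall b, b \in G -> (x <= b <= 2 * x)%nat,
    INR (size G) <= 7 * cbrt (INR x) / eps &
    INR (count (fun k => ~~ sumset_mem A G k) (iota (2 * x) (reach x + 1 - 2 * x)))
      <= eps * INR x / 16].
Proof.
move=> u_le_x x_le.
have x_ge1 : 1 <= INR x by have := u_ge1; lra.
have c_ge1 := cbrt_ge1 x_ge1.
have ln_eps_neg := ln_eps_lt0.
have delta_ge0 : 0 <= eps * cbrt (INR x) ^ 2 * - ln eps.
  by apply: Rmult_le_pos; [apply: Rmult_le_pos; [lra | apply: pow_le; lra] | lra].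
have [_ delta_lt] := nfloor_spec delta_ge0.
set d := (nfloor (eps * cbrt (INR x) ^ 2 * - ln eps)).+1 in delta_lt.
have d_ge : eps * cbrt (INR x) ^ 2 * - ln eps <= INR d by rewrite /d S_INR; lra.
have hit : forall k, k \in iota (2 * x) (reach x + 1 - 2 * x) ->
    (d <= count (fun b => (b <= k)%nat && A (k - b)%nat) (iota x (x + 1)))%nat.
  move=> k; rewrite mem_iota => /andP [lo hi].
  by apply: nfloor_lt => //; apply: window_hits => //; lia.
have s_ge0 : 0 <= 6 * cbrt (INR x) / eps by apply: Rlt_le; apply: Rdiv_lt_0_compat; lra.
have [s_ge s_lt] := nceil_spec s_ge0.
have Bc_nonnil : iota x (x + 1) != [::] by rewrite addn1.
have [S [size_S sub_S uncovered]] :=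
  greedy_cover_exp (nceil (6 * cbrt (INR x) / eps)) Bc_nonnil hit.
exists S; split.
- by move=> b /sub_S; rewrite mem_iota => /andP [lo hi]; apply/andP; split; lia.
- apply: (Rle_trans _ _ _ (leq_INR size_S)).
  have : 1 <= cbrt (INR x) / eps by rewrite /Rdiv; have := inv_eps_gt64; nra.
  rewrite /Rdiv in s_lt *; lra.
have rounds := greedy_rounds_enough _ _ _ x_ge1 s_ge d_ge.
rewrite !size_iota in uncovered rounds.
have [_ reach_le] := reach_spec x.
have two_x_le := double_le_reach x ltac:(apply: INR_leq; simpl; lra).
have size_T : INR (reach x + 1 - 2 * x) <= 3 * INR x / eps.
  rewrite INR_subn; last by lia.
  rewrite plus_INR mult_INR /=.
  have : 0 <= INR x / eps by apply: Rmult_le_pos; [lra | apply: Rlt_le; apply: Rinv_0_lt_compat].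
  rewrite /Rdiv in reach_le *; lra.
apply: (Rle_trans _ _ _ uncovered).
apply: (Rle_trans _ (3 * INR x / eps * eps ^ 3)).
  apply: Rmult_le_compat => //; [apply: pos_INR | apply: Rlt_le; apply: exp_pos].
have -> : 3 * INR x / eps * eps ^ 3 = 3 * eps * (eps * INR x) by field; lra.
have : 0 <= eps * INR x by nra.
nra.
Qed.

Lemma sumset_mem_subset (B1 B2 : seq nat) (k : nat) :
  {subset B1 <= B2} -> sumset_mem A B1 k -> sumset_mem A B2 k.
Proof. by move=> sub /hasP [b /sub b_B2 hit]; apply/hasP; exists b. Qed.

Lemma count_missed_subset (s : seq nat) {B1 B2 : seq nat} : {subset B1 <= B2} ->
  (count (missed B2) s <= count (missed B1) s)%nat.
Proof.
move=> sub; apply: sub_count => k /andP [above not_hit]; rewrite /missed above /=.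
by apply: contra not_hit; apply: sumset_mem_subset.
Qed.

(* The slack factor 2 in [covers_upto] is what lets a new scale x add its own misses: on
   (2x, t] they are at most eps x/16, and eps (2x)/2 + eps x/16 <= eps t/2 when t > 3x. *)
Lemma covers_upto_cat (B G : seq nat) (T x : nat) :
  covers_upto B T -> u <= INR x -> (3 * x <= T)%nat ->
  INR (count (fun k => ~~ sumset_mem A G k) (iota (2 * x) (reach x + 1 - 2 * x)))
    <= eps * INR x / 16 ->
  covers_upto (B ++ G) (reach x).
Proof.
move=> covB u_le_x le_3x_T G_good t t_ge t_le.
have sub_B : {subset B <= B ++ G} by move=> b b_B; rewrite mem_cat b_B.
have sub_G : {subset G <= B ++ G} by move=> b b_G; rewrite mem_cat b_G orbT.
have [t_small | t_large] := leqP t T.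
  exact: Rle_trans (leq_INR (count_missed_subset _ sub_B)) (covB t t_ge t_small).
have x_ge1 : 1 <= INR x by have := u_ge1; lra.
have -> : (t + 1 = (2 * x + 1) + (t - 2 * x))%nat by lia.
rewrite iotaD count_cat plus_INR add0n.
have low : INR (count (missed (B ++ G)) (iota 0 (2 * x + 1))) <= eps * INR (2 * x) / 2.
  apply: Rle_trans (leq_INR (count_missed_subset _ sub_B)) _.
  by apply: covB; [rewrite mult_INR /=; lra | lia].
have high : (count (missed (B ++ G)) (iota (2 * x + 1) (t - 2 * x))
    <= count (fun k => ~~ sumset_mem A G k) (iota (2 * x) (reach x + 1 - 2 * x)))%nat.
  apply: (leq_trans (n := count (fun k => ~~ sumset_mem A G k) (iota (2 * x + 1) (t - 2 * x)))).
    by apply: sub_count => k /andP [_]; apply: contra; apply: sumset_mem_subset.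
  by apply: count_iota_mono; lia.
have t_ge3x : 3 * INR x <= INR t.
  by have := leq_INR (ltnW (leq_ltn_trans le_3x_T t_large)); rewrite mult_INR /=; lra.
move: low (leq_INR high); rewrite mult_INR /= /Rdiv in G_good *; nra.
Qed.

Lemma base_scale_spec : u <= INR base_scale < u + 1.
Proof. by apply: nceil_spec; apply: Rlt_le; apply: cbrt_pos. Qed.

Lemma base_scale_ge1 : (1 <= base_scale)%nat.
Proof. by apply: INR_leq; have := base_scale_spec; have := u_ge1; simpl; lra. Qed.

(* Below [2 * base_scale] at most two integers, those in [[2u, 2 * base_scale)], can be missed. *)
Lemma base_cover : exists G : seq nat,
  [/\ forall b, b \in G -> (base_scale <= b <= 2 * base_scale)%nat,
    INR (size G) <= 7 * cbrt (INR base_scale) / eps & covers_upto G (reach base_scale)].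
Proof.
have [x0_ge x0_lt] := base_scale_spec.
have [G [G_range G_size G_good]] := scale_cover _ x0_ge ltac:(lra).
exists G; split => // t t_ge t_le.
have two_x0_le := double_le_reach _ base_scale_ge1.
apply: (Rle_trans _ (INR (count (missed G) (iota 0 (reach base_scale + 1))))).
  by apply: leq_INR; apply: count_iota_mono; lia.
have -> : (reach base_scale + 1
    = 2 * base_scale + (reach base_scale + 1 - 2 * base_scale))%nat by lia.
rewrite iotaD count_cat plus_INR add0n.
have below : (count (missed G) (iota 0 (2 * base_scale)) <= 2)%nat.
  apply: (leq_trans (n := count (fun k => 2 * base_scale - 2 <= k)%nat
                                (iota 0 (2 * base_scale)))); last by rewrite count_iota_ge; lia.
  apply: sub_count => k /andP [/RlebP k_ge _]; apply: INR_leq.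
  rewrite INR_subn; last by have := base_scale_ge1; lia.
  by rewrite mult_INR /=; lra.
have above : (count (missed G) (iota (2 * base_scale) (reach base_scale + 1 - 2 * base_scale))
    <= count (fun k => ~~ sumset_mem A G k)
         (iota (2 * base_scale) (reach base_scale + 1 - 2 * base_scale)))%nat.
  by apply: sub_count => k /andP [].
move: (leq_INR below) (leq_INR above) => /= below' above'.
rewrite /Rdiv in G_good *; nra.
Qed.

Lemma multiscale_cover (x : nat) : (base_scale <= x)%nat -> INR x <= eps * INR n ->
  exists B : seq nat, [/\ forall b, b \in B -> (base_scale <= b <= 2 * x)%nat,
    INR (size B) <= 14 * cbrt (INR x) / eps + 7 * cbrt (INR base_scale) / eps &
    covers_upto B (reach x)].
Proof.
have [x0_ge _] := base_scale_spec.
have x0_ge1 := base_scale_ge1.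
have cbrt_ratio_ge0 (z : nat) : 0 <= cbrt (INR z) / eps.
  by apply: Rlt_le; apply: Rdiv_lt_0_compat; [apply: cbrt_pos | lra].
elim/ltn_ind: x => x IH x0_le_x x_le.
have [-> | x_neq_x0] := eqVneq x base_scale.
  have [G [G_range G_size G_good]] := base_cover.
  by exists G; split => //; have := cbrt_ratio_ge0 base_scale; lra.
have {x0_le_x} x0_lt_x : (base_scale < x)%nat by rewrite ltn_neqAle eq_sym x_neq_x0.
have u_le_x : u <= INR x by have := leq_INR (ltnW x0_lt_x); lra.
set y := maxn base_scale (x %/ 8).
have [B1 [B1_range B1_size B1_good]] : exists B1 : seq nat,
    [/\ forall b, b \in B1 -> (base_scale <= b <= 2 * y)%nat,
      INR (size B1) <= 7 * cbrt (INR x) / eps + 7 * cbrt (INR base_scale) / eps &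
      covers_upto B1 (reach y)].
  rewrite /y; case: (leqP (x %/ 8) base_scale) => [small | large].
    have [G [G_range G_size G_good]] := base_cover.
    by exists G; split => //; have := cbrt_ratio_ge0 x; lra.
  have [|||B1 [B1_range B1_size B1_good]] := IH (x %/ 8)%nat; try lia.
    by have := leq_INR (leq_div x 8); lra.
  exists B1; split => //.
  have y_gt0 : 0 < INR (x %/ 8) by apply: lt_0_INR; apply/ltP; lia.
  have le_8y_x : 8 * INR (x %/ 8) <= INR x.
    by have := leq_INR (leq_divM x 8); rewrite mult_INR /=; lra.
  have := cbrt_mul8_le y_gt0 le_8y_x; have := Rinv_0_lt_compat _ eps_gt0.
  rewrite /Rdiv in B1_size *; nra.
have [G [G_range G_size G_good]] := scale_cover x u_le_x x_le.
exists (B1 ++ G); split.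
- move=> b; rewrite mem_cat => /orP [/B1_range | /G_range] /andP [lo hi];
    by apply/andP; split; lia.
- by rewrite size_cat plus_INR; lra.
apply: covers_upto_cat B1_good u_le_x _ G_good.
by apply: three_mul_le_reach; lia.
Qed.

Lemma reach_top : 2 * INR n - 2 / eps - 1 < INR (reach (nfloor (eps * INR n))) <= 2 * INR n.
Proof.
have en_ge0 : 0 <= eps * INR n by have := n_gt0; nra.
have [X_le X_gt] := nfloor_spec en_ge0.
have [reach_gt reach_le] := reach_spec (nfloor (eps * INR n)).
have inv_gt0 := Rinv_0_lt_compat _ eps_gt0.
have -> : 2 * INR n = 2 / eps * (eps * INR n) by field; lra.
rewrite /Rdiv in reach_gt reach_le *; nra.
Qed.

Lemma covers_upto_top (B : seq nat) : covers_upto B (reach (nfloor (eps * INR n))) ->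
  forall t : nat, 2 * u <= INR t -> INR t <= 2 * INR n ->
    INR (count (missed B) (iota 0 (t + 1))) <= eps * INR t.
Proof.
move=> covB t t_ge t_le.
set R := reach (nfloor (eps * INR n)) in covB *.
have [R_gt R_le] := reach_top; rewrite -/R in R_gt R_le.
have t_ge0 := pos_INR t.
have [t_small | t_large] := leqP t R.
  by have := covB t t_ge t_small; nra.
have eps_n_le : eps * INR n <= INR n / 64 by have := n_gt0; rewrite /Rdiv; nra.
have inv_eps_le := inv_eps_le_eps_n.
have R_ge : 2 * u <= INR R by rewrite /Rdiv in inv_eps_le eps_n_le R_gt; lra.
have R_half_ge : 2 / eps + 1 <= eps * INR R / 2.
  have : eps * (2 * INR n - 2 / eps - 1) <= eps * INR R by apply: Rmult_le_compat_l; lra.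
  have -> : eps * (2 * INR n - 2 / eps - 1) = 2 * (eps * INR n) - 2 - eps by field; lra.
  have := inv_eps_gt64; rewrite /Rdiv in inv_eps_le *; lra.
have -> : (t + 1 = (R + 1) + (t - R))%nat by lia.
rewrite iotaD count_cat plus_INR add0n.
have := covB R R_ge (leqnn R).
have := leq_INR (count_size (missed B) (iota (R + 1) (t - R))).
rewrite size_iota INR_subn; last by lia.
have := leq_INR (ltnW t_large).
have : eps * INR R <= eps * INR t by apply: Rmult_le_compat_l; [lra | apply: leq_INR; lia].
rewrite /Rdiv in R_half_ge *; lra.
Qed.

Lemma sumset_cover : exists B : seq nat,
  uniq B /\
  (forall b : nat, b \in B -> u <= INR b /\ INR b <= 2 * eps * INR n) /\
  INR (size B) <= 21 * Rpower eps (-2/3) * u /\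
  forall t : nat, 2 * u <= INR t -> INR t <= 2 * INR n ->
    INR (count (fun k => Rleb (2 * u) (INR k) && ~~ sumset_mem A B k) (iota 0 (t + 1)))
      <= eps * INR t.
Proof.
have en_ge0 : 0 <= eps * INR n by have := n_gt0; nra.
have [X_le X_gt] := nfloor_spec en_ge0.
set X := nfloor (eps * INR n) in X_le X_gt.
have [x0_ge x0_lt] := base_scale_spec.
have x0_le_X : (base_scale <= X)%nat by apply: INR_leq; lra.
have [B [B_range B_size B_good]] := multiscale_cover X x0_le_X X_le.
exists (undup B); split; first exact: undup_uniq.
split.
  move=> b; rewrite mem_undup => /B_range /andP [/leq_INR lo /leq_INR].
  by rewrite mult_INR /=; lra.
split.
  apply: Rle_trans (leq_INR (size_undup B)) _; apply: (Rle_trans _ _ _ B_size).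
  have x0_gt0 : 0 < INR base_scale by have := u_ge1; lra.
  have cbrt_x0_le := cbrt_le x0_gt0 (leq_INR x0_le_X).
  have cbrt_X_le : cbrt (INR X) <= cbrt eps * u.
    by rewrite /cbrt Rpower_mult_distr; [apply: cbrt_le | | apply: n_gt0]; lra.
  have inv_gt0 := Rinv_0_lt_compat _ eps_gt0.
  rewrite Rpower_neg_two_thirds // /Rdiv; nra.
move=> t t_ge t_le.
rewrite (eq_count (a2 := missed B)); first exact: covers_upto_top.
by move=> k; rewrite /missed /sumset_mem has_undup.
Qed.

End MultiscaleCover.

(* With w = eps^(-1/2) the hypothesis reads n > 10^5 w^9, hence n^(1/3) > 46 w^3. *)
Lemma large_n_bounds {eps : R} {n : nat} : 0 < eps -> eps < 1/64 ->
  INR n > 10^5 * Rpower eps (-9/2) ->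
  [/\ 3 <= eps * cbrt (INR n), cbrt (INR n) + 2 <= eps * INR n
    & 4 / eps + 2 <= eps * INR n].
Proof.
move=> eps_gt0 eps_lt n_gt.
set w := Rpower eps (-1/2).
have w_gt0 : 0 < w by apply: exp_pos.
have w2 : eps * w ^ 2 = 1.
  rewrite /w -Rpower_pow // Rpower_mult.
  have -> : -1/2 * INR 2 = - (1) by simpl; field.
  by rewrite Rpower_Ropp Rpower_1 //; field; lra.
have w9 : w ^ 9 = Rpower eps (-9/2).
  by rewrite /w -Rpower_pow // Rpower_mult; congr Rpower; simpl; field.
rewrite -w9 in n_gt.
have n_gt0 : 0 < INR n by have := pow_lt _ 9 w_gt0; lra.
have u3 := cbrt_pow3 n_gt0.
set u := cbrt (INR n) in u3 *.
have u_gt0 : 0 < u by apply: cbrt_pos.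
have w_gt8 : 8 < w.
  apply: Rnot_le_lt => w_le.
  have : w ^ 2 <= 8 ^ 2 by apply: pow_incr; lra.
  simpl in w2 |- *; nra.
have w3_ge : 512 <= w ^ 3.
  have : 8 ^ 3 <= w ^ 3 by apply: pow_incr; lra.
  simpl; lra.
have u_gt : 46 * w ^ 3 < u.
  apply: Rnot_le_lt => u_le.
  have : u ^ 3 <= (46 * w ^ 3) ^ 3 by apply: pow_incr; lra.
  have -> : (46 * w ^ 3) ^ 3 = 97336 * w ^ 9 by ring.
  lra.
have eps_u_ge : 46 * w <= eps * u.
  have -> : 46 * w = eps * (46 * w ^ 3) by rewrite -[46 * w]Rmult_1_r -w2; ring.
  by apply: Rmult_le_compat_l; lra.
have en : eps * INR n = (eps * u) * u ^ 2 by rewrite -u3; ring.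
have en_ge : 368 * u ^ 2 <= eps * INR n.
  by rewrite en; apply: Rmult_le_compat_r; [apply: pow_le | ]; lra.
split; first by lra.
  by simpl in en_ge; nra.
have -> : 4 / eps = 4 * w ^ 2 by rewrite -[4 / eps]Rmult_1_r -w2; field; lra.
have : w ^ 2 <= u by simpl in w3_ge |- *; nra.
simpl in en_ge |- *; nra.
Qed.

Close Scope R_scope.

Theorem lemma5p1 :
  exists eps0 : R, exists C : R,
    (0 < eps0)%R /\ (eps0 < 1/2)%R /\ (0 < C)%R /\
    forall (eps : R) (n : nat) (A : pred nat),
      (0 < eps)%R -> (eps < eps0)%R ->
      (INR n > 10^5 * Rpower eps (-9/2))%R ->
      (forall x m : nat,
          (Rpower (INR n) (1/3) <= INR x)%R -> (INR x <= eps * INR n)%R ->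
          (2 * INR x <= INR m)%R -> (INR m <= 2 / eps * INR x)%R ->
          (* |A ∩ [[m-2x, m-x]]| ; note m >= 2x *)
          (INR (count A (iota (m - 2 * x) (x + 1)))
             > eps * Rpower (INR x) (2/3) * ln (INR n / INR x))%R) ->
      exists B : seq nat,
        uniq B /\
        (forall b : nat, b \in B ->
            (Rpower (INR n) (1/3) <= INR b)%R /\ (INR b <= 2 * eps * INR n)%R) /\
        (INR (size B) <= C * Rpower eps (-2/3) * Rpower (INR n) (1/3))%R /\
        forall t : nat,
          (2 * Rpower (INR n) (1/3) <= INR t)%R -> (INR t <= 2 * INR n)%R ->
          (* |[[2 n^(1/3), t]] \ (A + B)| *)
          (INR (count (fun k => Rleb (2 * Rpower (INR n) (1/3)) (INR k)
                                && ~~ sumset_mem A B k)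
                      (iota 0 (t + 1)))
             <= eps * INR t)%R.
Proof.
exists (1/64)%R, 21%R; split; first lra; split; first lra; split; first lra.
move=> eps n A eps_gt0 eps_lt n_large A_dense.
have [eps_u_ge3 u_le inv_eps_le] := large_n_bounds eps_gt0 eps_lt n_large.
exact: sumset_cover eps_gt0 eps_lt eps_u_ge3 u_le inv_eps_le A_dense.
Qed.
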